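(* Let $G$ be a simple graph with $m$ edges and girth $g(G)\ge 4$ (i.e. $G$ has no triangles). For $k=2,3,4$ define $\xi_{k-1}(G)=\sum_{uv\in E(G)}M_1^k(G-\{u,v\})$ (so $\xi_1$ sums $M_1$, $\xi_2$ sums $F$, $\xi_3$ sums $M_1^4$ of $G-\{u,v\}$ over all edges $uv$). Then \begin{enumerate} \item $\xi_1(G)=(m+3)M_1(G)-F(G)-4M_2(G)-2m$; \item $\xi_2(G)=(m+3)F(G)-M_1^4(G)-3\alpha(G)+6M_2(G)-4M_1(G)+2m$; \item $\xi_3(G)=(m+4)M_1^4(G)-M_1^5(G)+5M_1(G)-2m-4\alpha_2(G)+6\alpha(G)-6F(G)-8M_2(G)$. \end{enumerate}
   Context: All graphs are finite, simple and undirected. $d_G(v)$ is the degree of $v$ in $G$; $G-\{u,v\}$ is the graph obtained by deleting the vertices $u,v$ and all incident edges. The girth $g(G)$ is the length of a shortest cycle (infinite if acyclic). $M_1^\alpha(G)=\sum_{v\in V(G)}d_G(v)^\alpha$ (exponent on degrees); $M_1(G)=M_1^2(G)$, $F(G)=M_1^3(G)$; $M_2(G)=\sum_{uv\in E(G)}d_G(u)d_G(v)$; $\alpha_\lambda(G)=\sum_{uv\in E(G)}d_G(u)d_G(v)\big[d_G(u)^\lambda+d_G(v)^\lambda\big]$, $\alpha(G)=\alpha_1(G)$. *)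

From mathcomp Require Import all_boot all_order all_algebra.
Set Implicit Arguments. Unset Strict Implicit. Unset Printing Implicit Defensive.
Import Order.TTheory GRing.Theory Num.Theory.

Section Graph.
Variables (T : finType) (e : rel T).

Definition simple_graph : Prop := symmetric e /\ irreflexive e.

Definition triangle_free : Prop :=
  forall u v w : T, e u v -> e v w -> e w u -> False.

Definition edges : {set {set T}} := [set [set u; v] | u in T, v in T & e u v].

Definition deg_in (S : {set T}) (v : T) : nat := #|[set w in S | e v w]|.
Definition deg (v : T) : nat := deg_in setT v.

Definition M1k_in (S : {set T}) (k : nat) : nat :=
  \sum_(v in S) deg_in S v ^ k.
Definition M1k (k : nat) : nat := M1k_in setT k.

(* G - {u,v} for an edge f = {u,v} is the induced subgraph on ~: f. *)
Definition xi (k : nat) : nat := \sum_(f in edges) M1k_in (~: f) k.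

Definition M2 : nat := \sum_(f in edges) \prod_(v in f) deg v.

Definition alpha_lam (l : nat) : nat :=
  \sum_(f in edges) (\prod_(v in f) deg v) * (\sum_(v in f) deg v ^ l).
End Graph.

From mathcomp Require Import all_boot all_order all_algebra.
From mathcomp Require Import ring zify.
Import Order.TTheory GRing.Theory Num.Theory.
Set Implicit Arguments. Unset Strict Implicit. Unset Printing Implicit Defensive.

(* The three identities are obtained from one computation valid for every k.
   For an edge uv of a triangle-free graph, every vertex w outside {u,v} loses
   at most one neighbour in G - {u,v}, so d'(w)^k = d(w)^k - [w~u or w~v] *
   (d(w)^k - (d(w)-1)^k).  Summing over w expresses M_1^k(G - {u,v}) through
   d(u), d(v) and the "drops" d(w)^k - (d(w)-1)^k over the neighbours of u
   and v.  Summing over all edges is done through arcs (ordered adjacent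
   pairs), which counts each edge twice but makes all the sums symmetric and
   linear; every quantity then becomes an integer combination of the arc
   moments A(i,j) = sum over arcs uv of d(u)^i d(v)^j:
     M_1^(j+1) = A(j,0),  2m = A(0,0),  2 M_2 = A(1,1),
     2 alpha_l = A(l+1,1) + A(1,l+1),  A(i,j) = A(j,i).
   Expanding the drop polynomial for k = 2, 3, 4 and eliminating the moments
   by linear arithmetic gives the three formulas. *)

Local Open Scope ring_scope.

Lemma sum_setT (R : nmodType) (T : finType) (G : T -> R) :
  \sum_(w in [set: T]) G w = \sum_w G w.
Proof. by apply: eq_bigl => w; rewrite inE. Qed.

Lemma big_pair (R : Type) (idx : R) (op : Monoid.com_law idx) (T : finType)
    (u v : T) (F : T -> R) :
  u != v -> \big[op/idx]_(x in [set u; v]) F x = op (F u) (F v).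
Proof. by move=> neq_uv; rewrite big_setU1 ?inE // big_set1. Qed.

Lemma sum_split_pair (R : nmodType) (T : finType) (u v : T) (G : T -> R) :
  u != v -> \sum_w G w = G u + G v + \sum_(w in ~: [set u; v]) G w.
Proof.
move=> neq_uv.
by rewrite -sum_setT (big_setID [set u; v]) /= setTI setTD big_pair.
Qed.

Lemma Posz_sum (I : finType) (P : pred I) (F : I -> nat) :
  (\sum_(i | P i) F i)%N%:Z = \sum_(i | P i) (F i)%:Z.
Proof. exact: (big_morph Posz PoszD (erefl _)). Qed.

Lemma PoszX (n k : nat) : (n ^ k)%N%:Z = n%:Z ^+ k.
Proof. by rewrite -!natz natrX. Qed.

Section ArcSums.
Variables (T : finType) (e : rel T).
Hypothesis e_sym : symmetric e.
Hypothesis e_irr : irreflexive e.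

Definition degz (w : T) : int := (deg e w)%:Z.
Definition adj (u v : T) : int := (e u v)%:R.

Definition arc_sum (F : T -> T -> int) : int := \sum_u \sum_(v | e u v) F u v.

Definition arc_moment (i j : nat) : int :=
  arc_sum (fun u v => degz u ^+ i * degz v ^+ j).

Lemma adjacent_neq u v : e u v -> u != v.
Proof. by apply: contraTneq => ->; rewrite e_irr. Qed.

Lemma deg_in_sum (S : {set T}) (w : T) :
  (deg_in e S w)%:Z = \sum_(x in S) adj w x.
Proof.
rewrite /deg_in -sum1dep_card Posz_sum big_mkcondr /=.
by apply: eq_bigr => x _; rewrite /adj; case: (e w x).
Qed.

Lemma degz_sum (w : T) : degz w = \sum_x adj w x.
Proof. by rewrite /degz /deg deg_in_sum sum_setT. Qed.

Lemma sum_adj (u : T) (F : T -> int) :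
  \sum_w adj u w * F w = \sum_(w | e u w) F w.
Proof.
rewrite [RHS]big_mkcond /=.
by apply: eq_bigr => w _; rewrite /adj; case: (e u w); rewrite ?mul1r ?mul0r.
Qed.

Lemma degz_arcs (u : T) : degz u = \sum_(v | e u v) 1.
Proof. by rewrite degz_sum -sum_adj; under [RHS]eq_bigr do rewrite mulr1. Qed.

Lemma eq_arc_sum F G : (forall u v, e u v -> F u v = G u v) ->
  arc_sum F = arc_sum G.
Proof. by move=> eq_FG; apply: eq_bigr => u _; apply: eq_bigr => v; apply: eq_FG. Qed.

Lemma arc_sumD F G :
  arc_sum (fun u v => F u v + G u v) = arc_sum F + arc_sum G.
Proof. by rewrite /arc_sum -big_split; apply: eq_bigr => u _; rewrite big_split. Qed.

Lemma arc_sumB F G :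
  arc_sum (fun u v => F u v - G u v) = arc_sum F - arc_sum G.
Proof. by rewrite /arc_sum -sumrB; apply: eq_bigr => u _; rewrite sumrB. Qed.

Lemma arc_sumZ (c : int) F : c * arc_sum F = arc_sum (fun u v => c * F u v).
Proof. by rewrite /arc_sum mulr_sumr; apply: eq_bigr => u _; rewrite mulr_sumr. Qed.

Lemma arc_sum_swap F : arc_sum (fun u v => F v u) = arc_sum F.
Proof.
rewrite /arc_sum (exchange_big_dep xpredT) //=.
by apply: eq_bigr => u _; apply: eq_bigl => v; rewrite e_sym.
Qed.

Lemma arc_sum_tail (h : T -> int) :
  arc_sum (fun u _ => h u) = \sum_u degz u * h u.
Proof.
apply: eq_bigr => u _; rewrite degz_arcs mulr_suml.
by under [RHS]eq_bigr do rewrite mul1r.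
Qed.

Lemma arc_sum_const (c : int) : arc_sum (fun _ _ => c) = c * arc_moment 0 0.
Proof. by rewrite arc_sumZ; apply: eq_arc_sum => u v _; rewrite !expr0 !mulr1. Qed.

Lemma arc_sum_symmetrize (h : T -> int) :
  arc_sum (fun u v => h u + h v) = 2 * arc_sum (fun u _ => h u).
Proof. by rewrite arc_sumD (arc_sum_swap (fun u _ => h u)) mulr2n mulrDl mul1r. Qed.

Lemma arc_moment_swap i j : arc_moment i j = arc_moment j i.
Proof.
by rewrite /arc_moment -arc_sum_swap; apply: eq_arc_sum => u v _; rewrite mulrC.
Qed.

Lemma M1k_in_sum (S : {set T}) (k : nat) :
  (M1k_in e S k)%:Z = \sum_(w in S) (deg_in e S w)%:Z ^+ k.
Proof. by rewrite /M1k_in Posz_sum; under eq_bigr do rewrite PoszX. Qed.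

Lemma M1k_sum (k : nat) : (M1k e k)%:Z = \sum_w degz w ^+ k.
Proof. by rewrite /M1k M1k_in_sum sum_setT. Qed.

Lemma deg_delete_edge (u v w : T) : e u v ->
  (deg_in e (~: [set u; v]) w)%:Z = degz w - adj w u - adj w v.
Proof.
move=> e_uv; rewrite deg_in_sum degz_sum (sum_split_pair _ (adjacent_neq e_uv)).
ring.
Qed.

Definition pow_drop (k : nat) (x : int) : int := x ^+ k - (x - 1) ^+ k.

Definition nbr_drop (k : nat) (u : T) : int := \sum_(w | e u w) pow_drop k (degz w).

Lemma arcs_of_edge (a b x y : T) : e a b ->
  (e x y && ([set x; y] == [set a; b])) = ((x, y) \in [set (a, b); (b, a)]).
Proof.
move=> e_ab; rewrite !inE; apply/andP/orP.
- case=> e_xy /eqP eq_xy.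
  have x_ab : x \in [set a; b] by rewrite -eq_xy set21.
  have y_ab : y \in [set a; b] by rewrite -eq_xy set22.
  move: x_ab y_ab e_xy; rewrite !inE => /orP[/eqP->|/eqP->] /orP[/eqP->|/eqP->];
    rewrite ?e_irr // => _; [left | right]; exact: eqxx.
- case=> /eqP [-> ->]; split => //; first by rewrite e_sym.
  by rewrite setUC.
Qed.

Lemma edge_sum_arcs (F : {set T} -> int) :
  2 * \sum_(f in edges e) F f = arc_sum (fun u v => F [set u; v]).
Proof.
rewrite /arc_sum pair_big_dep /=.
rewrite (partition_big (fun q : T * T => [set q.1; q.2]) (mem (edges e))) /=;
  last by case=> x y /= e_xy; apply/imset2P; exists x y; rewrite ?inE.
rewrite mulr_sumr; apply: eq_bigr => f /imset2P [a b _]; rewrite inE => e_ab ->.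
rewrite (eq_bigl (fun q => q \in [set (a, b); (b, a)]));
  last by case=> x y /=; rewrite arcs_of_edge.
rewrite big_pair /= ?[[set b; a]]setUC; first by rewrite mulr2n mulrDl mul1r.
by apply/eqP => -[eq_ab _]; move: e_ab; rewrite eq_ab e_irr.
Qed.

Hypothesis e_tri : triangle_free e.

(* Without triangles no vertex is adjacent to both ends of an edge, so its
   degree in G - {u,v} drops by at most one. *)
Lemma pow_deg_delete_edge (u v w : T) (k : nat) : e u v ->
  (deg_in e (~: [set u; v]) w)%:Z ^+ k
    = degz w ^+ k - (adj u w + adj v w) * pow_drop k (degz w).
Proof.
move=> e_uv; rewrite deg_delete_edge // /adj /pow_drop [e w u]e_sym [e w v]e_sym.
case e_uw: (e u w); case e_vw: (e v w) => /=.
- by case: (e_tri e_uv e_vw); rewrite e_sym.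
all: rewrite ?subr0 ?addr0 ?add0r ?mul1r ?mul0r; ring.
Qed.

Lemma M1k_delete_edge (u v : T) (k : nat) : e u v ->
  (M1k_in e (~: [set u; v]) k)%:Z
    = (M1k e k)%:Z - degz u ^+ k - degz v ^+ k - nbr_drop k u - nbr_drop k v
      + pow_drop k (degz u) + pow_drop k (degz v).
Proof.
move=> e_uv; pose G w := degz w ^+ k - (adj u w + adj v w) * pow_drop k (degz w).
have sub_G : (M1k_in e (~: [set u; v]) k)%:Z = \sum_(w in ~: [set u; v]) G w.
  by rewrite M1k_in_sum; apply: eq_bigr => w _; rewrite pow_deg_delete_edge.
have sum_G : \sum_w G w = (M1k e k)%:Z - nbr_drop k u - nbr_drop k v.
  rewrite sumrB M1k_sum -addrA -opprD; congr (_ - _).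
  by under eq_bigr do rewrite mulrDl; rewrite big_split !sum_adj.
have G_u : G u = degz u ^+ k - pow_drop k (degz u).
  by rewrite /G /adj e_irr [e v u]e_sym e_uv mul1r.
have G_v : G v = degz v ^+ k - pow_drop k (degz v).
  by rewrite /G /adj e_irr e_uv mul1r.
move: sum_G; rewrite sub_G (sum_split_pair G (adjacent_neq e_uv)) G_u G_v => sum_G.
by rewrite (canRL (addKr _) sum_G); ring.
Qed.

Definition drop_moment (i k : nat) : int :=
  arc_sum (fun u v => degz u ^+ i * pow_drop k (degz v)).

Lemma xi_arcs (k : nat) :
  2 * (xi e k)%:Z = (M1k e k)%:Z * arc_moment 0 0
                    - 2 * (arc_moment k 0 + drop_moment 1 k - drop_moment 0 k).
Proof.
pose h u := degz u ^+ k + nbr_drop k u - pow_drop k (degz u).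
have per_edge : forall u v, e u v ->
    (M1k_in e (~: [set u; v]) k)%:Z = (M1k e k)%:Z - (h u + h v).
  by move=> u v e_uv; rewrite M1k_delete_edge // /h; ring.
rewrite /xi Posz_sum edge_sum_arcs (eq_arc_sum per_edge) arc_sumB.
rewrite arc_sum_const arc_sum_symmetrize /h arc_sumB arc_sumD.
have -> : arc_sum (fun u _ => degz u ^+ k) = arc_moment k 0.
  by apply: eq_arc_sum => u v _; rewrite expr0 mulr1.
have -> : arc_sum (fun u _ => nbr_drop k u) = drop_moment 1 k.
  by rewrite arc_sum_tail; apply: eq_bigr => u _; rewrite mulr_sumr expr1.
have -> : arc_sum (fun u _ => pow_drop k (degz u)) = drop_moment 0 k.
  by rewrite -arc_sum_swap; apply: eq_arc_sum => u v _; rewrite mul1r.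
by [].
Qed.

Ltac arc_linear := rewrite /drop_moment /arc_moment ?arc_sumZ;
  repeat first [rewrite -arc_sumB | rewrite -arc_sumD];
  apply: eq_arc_sum => u v _; rewrite /pow_drop; ring.

Lemma drop_moment2 i : drop_moment i 2 = 2 * arc_moment i 1 - arc_moment i 0.
Proof. arc_linear. Qed.

Lemma drop_moment3 i :
  drop_moment i 3 = 3 * arc_moment i 2 - 3 * arc_moment i 1 + arc_moment i 0.
Proof. arc_linear. Qed.

Lemma drop_moment4 i : drop_moment i 4 =
  4 * arc_moment i 3 - 6 * arc_moment i 2 + 4 * arc_moment i 1 - arc_moment i 0.
Proof. arc_linear. Qed.

Lemma M1k_arcs j : (M1k e j.+1)%:Z = arc_moment j 0.
Proof.
rewrite M1k_sum /arc_moment (eq_arc_sum (G := fun u _ => degz u ^+ j));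
  last by move=> u v _; rewrite expr0 mulr1.
by rewrite arc_sum_tail; apply: eq_bigr => w _; rewrite exprS.
Qed.

Lemma size_arcs : 2 * (#|edges e|)%:Z = arc_moment 0 0.
Proof. by rewrite -natz -sumr_const edge_sum_arcs arc_sum_const mul1r. Qed.

Lemma M2_arcs : 2 * (M2 e)%:Z = arc_moment 1 1.
Proof.
rewrite /M2 Posz_sum edge_sum_arcs; apply: eq_arc_sum => u v e_uv.
by rewrite big_pair ?adjacent_neq // PoszM !expr1.
Qed.

Lemma alpha_arcs l : 2 * (alpha_lam e l)%:Z = arc_moment l.+1 1 + arc_moment 1 l.+1.
Proof.
rewrite /alpha_lam Posz_sum edge_sum_arcs -arc_sumD; apply: eq_arc_sum => u v e_uv.
rewrite !big_pair ?adjacent_neq // !PoszM PoszD !PoszX -/(degz u) -/(degz v).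
by rewrite !exprS !expr0; ring.
Qed.

End ArcSums.

Theorem lemma2p2 (T : finType) (e : rel T) :
  simple_graph e -> triangle_free e ->
  let m : int := (#|edges e|)%:Z in
  [/\ (xi e 2)%:Z = (m + 3) * (M1k e 2)%:Z - (M1k e 3)%:Z - 4 * (M2 e)%:Z - 2 * m,
      (xi e 3)%:Z = (m + 3) * (M1k e 3)%:Z - (M1k e 4)%:Z - 3 * (alpha_lam e 1)%:Z
                    + 6 * (M2 e)%:Z - 4 * (M1k e 2)%:Z + 2 * m
    & (xi e 4)%:Z = (m + 4) * (M1k e 4)%:Z - (M1k e 5)%:Z + 5 * (M1k e 2)%:Z - 2 * m
                    - 4 * (alpha_lam e 2)%:Z + 6 * (alpha_lam e 1)%:Z
                    - 6 * (M1k e 3)%:Z - 8 * (M2 e)%:Z].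
Proof.
move=> [e_sym e_irr] e_tri m.
have two_m : 2 * m = arc_moment e 0 0 := size_arcs e_sym e_irr.
have two_M2 := M2_arcs e_sym e_irr.
have two_alpha1 := alpha_arcs e_sym e_irr 1.
have two_alpha2 := alpha_arcs e_sym e_irr 2.
have xi2 := xi_arcs e_sym e_irr e_tri 2.
have xi3 := xi_arcs e_sym e_irr e_tri 3.
have xi4 := xi_arcs e_sym e_irr e_tri 4.
rewrite drop_moment2 drop_moment2 in xi2.
rewrite drop_moment3 drop_moment3 in xi3.
rewrite drop_moment4 drop_moment4 in xi4.
rewrite !M1k_arcs -two_m in xi2 xi3 xi4 *.
rewrite !(arc_moment_swap e_sym 0) !(arc_moment_swap e_sym 1 2)
  !(arc_moment_swap e_sym 1 3) in xi2 xi3 xi4 two_alpha1 two_alpha2.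
split; lia.
Qed.
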